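(* For every unital formal multiplication $F$ on $V$ there exists a unique right alternative unital formal multiplication $F_0$ on $V$ that is similar to $F$, i.e. with $F_0|_{k[V]\otimes V}=F|_{k[V]\otimes V}$.
   Context: $k$ is a field of characteristic $0$; $k[V]$ is the symmetric algebra of $V$ with the coalgebra structure in which elements of $V$ are primitive, counit $\epsilon$ (degree-0 projection), $\pi_V$ the projection onto $V$, Sweedler notation. A unital formal multiplication on $V$ is a linear map $F\colon k[V]\otimes k[V]\to V$ with $F(1\otimes1)=0$ and $F(\mu\otimes1)=\pi_V(\mu)=F(1\otimes\mu)$; $F'\colon k[V]\otimes k[V]\to k[V]$, $F'(\xi)=\sum_{n\ge0}\frac1{n!}F(\xi_{(1)})\cdots F(\xi_{(n)})$, is the induced coalgebra morphism. $F$ is right alternative if $\sum F\big(F'(\mu\otimes\nu_{(1)})\otimes\nu_{(2)}\big)=\sum F\big(\mu\otimes F'(\nu_{(1)}\otimes\nu_{(2)})\big)$ for all $\mu,\nu\in k[V]$ (the formal identity $(\mathbf{x}\mathbf{y})\mathbf{y}=\mathbf{x}(\mathbf{y}\mathbf{y})$). Two unital formal multiplications on $V$ are similar if their restrictions to $k[V]\otimes V\subset k[V]\otimes k[V]$ coincide. *)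

From HB Require Import structures.
From mathcomp Require Import all_boot all_order all_algebra.
Set Implicit Arguments. Unset Strict Implicit. Unset Printing Implicit Defensive.
Import Order.TTheory GRing.Theory Num.Theory.
Local Open Scope ring_scope.

(* Representation of k[V] (symmetric algebra): a monomial x1...xp is a
   [seq V]; a linear map k[V] (x) k[V] -> V is the same as a family of maps
   on pairs of monomials that is multilinear and symmetric in each block
   (universal property of S^p V (x) S^q V). *)

Section FormalMul.
Variables (k : fieldType) (V : lmodType k).

Definition sym_multilinear (G : seq V -> V) : Prop :=
  (forall s s' : seq V, perm_eq s s' -> G s = G s') /\
  (forall (s1 s2 : seq V) (a : k) (x y : V),
      G (s1 ++ (a *: x + y) :: s2) = a *: G (s1 ++ x :: s2) + G (s1 ++ y :: s2)).

Definition bilin_on_kV (F : seq V -> seq V -> V) : Prop :=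
  (forall t, sym_multilinear (fun s => F s t)) /\
  (forall s, sym_multilinear (fun t => F s t)).

Definition piV (s : seq V) : V := if s is [:: x] then x else 0.

Definition unital_formal_mul (F : seq V -> seq V -> V) : Prop :=
  [/\ bilin_on_kV F, F [::] [::] = 0,
      forall s, F s [::] = piV s &
      forall s, F [::] s = piV s].

(* The iterated coproduct of s into n tensor factors is
   sum_f (part s f 0) (x) ... (x) (part s f (n-1)). *)
Definition part (s : seq V) (n : nat) (f : {ffun 'I_(size s) -> 'I_n}) (i : 'I_n)
  : seq V :=
  [seq nth 0 s (val j) | j <- enum 'I_(size s) & f j == i].

(* Fp_lin F L s t = L (F'(s (x) t)), for L : k[V] -> V linear (given on
   monomials).  F'(xi) = sum_n 1/n! F(xi_(1)) ... F(xi_(n)); the terms with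
   n > size s + size t vanish (some tensor factor is 1 (x) 1 and F(1(x)1)=0),
   so the sum is truncated there. *)
Definition Fp_lin (F : seq V -> seq V -> V) (L : seq V -> V) (s t : seq V) : V :=
  \sum_(n < (size s + size t).+1)
     (n`!%:R : k)^-1 *:
     \sum_(f : {ffun 'I_(size s) -> 'I_n})
       \sum_(g : {ffun 'I_(size t) -> 'I_n})
          L [seq F (part (s:=s) f i) (part (s:=t) g i) | i <- enum 'I_n].

(* Right alternativity, on monomials mu = s, nu = t (both sides are linear
   in mu and nu).  The coproduct of t is sum_h part t h 0 (x) part t h 1. *)
Definition right_alternative (F : seq V -> seq V -> V) : Prop :=
  forall s t : seq V,
    \sum_(h : {ffun 'I_(size t) -> 'I_2})
       Fp_lin F (fun w => F w (part (s:=t) h ord_max)) s (part (s:=t) h ord0)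
    = \sum_(h : {ffun 'I_(size t) -> 'I_2})
       Fp_lin F (fun w => F s w) (part (s:=t) h ord0) (part (s:=t) h ord_max).

Definition similar_fm (F G : seq V -> seq V -> V) : Prop :=
  forall (s : seq V) (y : V), F s [:: y] = G s [:: y].

End FormalMul.

(* Let D_F(s, t) ([ralt_defect F s t]) be the difference of the two sides of
   right alternativity.  For t of degree n >= 2, the component of F of degree
   n in its second argument enters D_F(s, t) only through the top-degree
   summands of F': on the right-hand side once for each of the 2^n splittings
   of t, on the left-hand side only for the two trivial splittings.  Hence
   D_F(s, t) + (2^n - 2) F(s, t) depends only on the components of F of
   degree < n.  As 2^n - 2 is invertible in characteristic 0, right
   alternativity determines the degree-n component from the lower ones,
   while the components of degree 0 and 1 are fixed by unitality and
   similarity.  Induction on n gives uniqueness, and defining the components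
   by this recursion gives existence. *)

From HB Require Import structures.
From mathcomp Require Import all_boot all_order all_algebra all_fingroup.
From mathcomp Require Import zify.
Set Implicit Arguments. Unset Strict Implicit. Unset Printing Implicit Defensive.
Import GRing.Theory.
Local Open Scope ring_scope.

Lemma map_split_at (I : eqType) (T Z : Type) (l : seq I) (i0 : I) (e : Z -> I -> T)
  (z0 : Z) : uniq l -> i0 \in l -> (forall i z, i != i0 -> e z i = e z0 i) ->
  exists Q1 Q2, forall z, map (e z) l = Q1 ++ e z i0 :: Q2.
Proof.
move=> ul il he; case/splitPr: il ul => l1 l2 ul.
rewrite cat_uniq /= in ul; case/and4P: ul => _ hn hn2 _.
have n1 : i0 \notin l1 by apply: contra hn => h; rewrite /= h.
exists (map (e z0) l1), (map (e z0) l2) => z; rewrite map_cat /=.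
congr (_ ++ _ :: _); apply/eq_in_map => i hi; apply: he.
  by apply: contraNneq n1 => <-.
by apply: contraNneq hn2 => <-.
Qed.

Lemma nth_cat_cons_other (T : Type) (x0 : T) s1 s2 (z z' : T) j : j != size s1 ->
  nth x0 (s1 ++ z :: s2) j = nth x0 (s1 ++ z' :: s2) j.
Proof.
move=> hj; rewrite !nth_cat; case: ltnP => // h.
case e: (j - size s1)%N => [|n] //=.
by move/eqP: e; rewrite subn_eq0 => e; case/eqP: hj; apply/eqP; rewrite eqn_leq e h.
Qed.

Lemma nth_cat_cons_size (T : Type) (x0 : T) s1 s2 (z : T) :
  nth x0 (s1 ++ z :: s2) (size s1) = z.
Proof. by rewrite nth_cat ltnn subnn. Qed.

Lemma map_nth_ord_enum (T : Type) (x0 : T) n s : size s = n ->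
  [seq nth x0 s (val j) | j <- enum 'I_n] = s.
Proof. by move=> e; rewrite (map_comp (nth x0 s) val) val_enum_ord -e -/(mkseq _ _) mkseq_nth. Qed.

Lemma perm_map_enum p (sg : {perm 'I_p}) : perm_eq (map sg (enum 'I_p)) (enum 'I_p).
Proof.
apply: uniq_perm; rewrite ?(map_inj_uniq (@perm_inj _ sg)) ?enum_uniq //.
move=> j; rewrite mem_enum; apply/mapP; exists ((sg^-1)%g j); rewrite ?mem_enum //.
by rewrite permKV.
Qed.

Lemma perm_eq_nth_perm (T : eqType) (x0 : T) (s s' : seq T) : perm_eq s s' ->
  exists sg : {perm 'I_(size s)}, forall j : 'I_(size s), nth x0 s' j = nth x0 s (sg j).
Proof.
rewrite perm_sym => hp; have /tuple_permP [sg e] : perm_eq s' (in_tuple s) by [].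
by exists sg => j; rewrite e -(tnth_nth x0) tnth_mktuple (tnth_nth x0).
Qed.

Lemma ffun_perm_inj p (T : Type) (sg : {perm 'I_p}) :
  injective (fun f : {ffun 'I_p -> T} => [ffun j => f ((sg^-1)%g j)]).
Proof.
move=> f1 f2 e; apply/ffunP => j.
by have := congr1 (fun f : {ffun 'I_p -> T} => f (sg j)) e; rewrite /= !ffunE permK.
Qed.

Lemma ord2_eq_max (x : 'I_2) : (x == ord_max) = (x != ord0).
Proof. by case: x => [[|[|]]]. Qed.

Section FormalMulTheory.
Variables (k : fieldType) (V : lmodType k).
Implicit Types (s t a b w : seq V) (G : seq V -> V) (F : seq V -> seq V -> V).

Lemma sym_multilinear_mem0 G : sym_multilinear G -> forall w, 0 \in w -> G w = 0.
Proof.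
move=> [Gperm Glin] w /perm_to_rem /Gperm ->.
have := Glin [::] (rem 0 w) 1 0 0; rewrite !scale1r addr0 => e.
by apply: (addrI (G ([::] ++ 0 :: rem 0 w))); rewrite addr0 -e.
Qed.

Lemma sym_multilinear0 : sym_multilinear (fun _ : seq V => (0 : V)).
Proof. by split => // *; rewrite scaler0 addr0. Qed.

Lemma sym_multilinearZ (c : k) G : sym_multilinear G -> sym_multilinear (fun t => c *: G t).
Proof.
move=> h; split; first by move=> t t' hp; rewrite (h.1 _ _ hp).
by move=> t1 t2 a x y; rewrite h.2 scalerDr !scalerA mulrC.
Qed.

Lemma sym_multilinear_if_size (P : pred nat) G1 G2 :
  sym_multilinear G1 -> sym_multilinear G2 ->
  sym_multilinear (fun t => if P (size t) then G1 t else G2 t).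
Proof.
move=> h1 h2; split.
  by move=> t t' hp; rewrite (perm_size hp); case: (P _); [apply: h1.1|apply: h2.1].
by move=> t1 t2 a x y; rewrite !size_cat /=; case: (P _); [apply: h1.2|apply: h2.2].
Qed.

Lemma piV_eq0 w : size w != 1%N -> piV w = 0.
Proof. by case: w => [|x [|y w]]. Qed.

Lemma piV_size_ge2 w : (2 <= size w)%N -> piV w = 0.
Proof. by case: w => [|x [|y w]]. Qed.

Definition partn p s m (f : {ffun 'I_p -> 'I_m}) (i : 'I_m) : seq V :=
  [seq nth 0 s (val j) | j <- enum 'I_p & f j == i].

Definition Fp_term F (L : seq V -> V) p s q t m :=
  \sum_(f : {ffun 'I_p -> 'I_m}) \sum_(g : {ffun 'I_q -> 'I_m})
     L [seq F (partn s f i) (partn t g i) | i <- enum 'I_m].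

Lemma Fp_linE F L s t : Fp_lin F L s t =
  \sum_(m < (size s + size t).+1) (m`!%:R)^-1 *: Fp_term F L (size s) s (size t) t m.
Proof. by []. Qed.

Lemma partn_size p s m (f : {ffun 'I_p -> 'I_m}) i : (size (partn s f i) <= p)%N.
Proof. by rewrite size_map size_filter (leq_trans (count_size _ _)) // size_enum_ord. Qed.

Lemma partn_const p s m (f : {ffun 'I_p -> 'I_m}) i :
  size s = p -> (forall j, f j = i) -> partn s f i = s.
Proof.
move=> hs hf; rewrite /partn (@eq_filter _ _ predT) ?filter_predT ?map_nth_ord_enum //.
by move=> j; rewrite /= hf eqxx.
Qed.

Lemma partn_nil p s m (f : {ffun 'I_p -> 'I_m}) i :
  (forall j, f j != i) -> partn s f i = [::].
Proof.
move=> hf; rewrite /partn (@eq_filter _ _ pred0) ?filter_pred0 //.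
by move=> j; rewrite /= (negbTE (hf j)).
Qed.

Lemma partn_size_const p t m (h : {ffun 'I_p -> 'I_m}) i :
  size (partn t h i) = p -> forall j, h j = i.
Proof.
rewrite size_map size_filter => e j; apply/eqP.
have : all (fun j => h j == i) (enum 'I_p) by rewrite all_count e size_enum_ord.
by move/allP; apply; rewrite mem_enum.
Qed.

Lemma partn_perm p s s' (sg : {perm 'I_p}) m (f : {ffun 'I_p -> 'I_m}) i :
  (forall j : 'I_p, nth 0 s' j = nth 0 s (sg j)) ->
  perm_eq (partn s' f i) (partn s [ffun j => f ((sg^-1)%g j)] i).
Proof.
move=> hs; rewrite /partn (eq_map (g := fun j : 'I_p => nth 0 s (val (sg j))));
  last by move=> j; rewrite hs.
rewrite (map_comp (fun j : 'I_p => nth 0 s (val j)) sg); apply: perm_map.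
have -> : [seq sg i0 | i0 <- [seq j <- enum 'I_p | f j == i]] =
    [seq j <- map sg (enum 'I_p) | [ffun j => f ((sg^-1)%g j)] j == i].
  rewrite [RHS]filter_map; congr map; apply: eq_filter => j /=.
  by rewrite ffunE permK.
by apply: perm_filter; apply: perm_map_enum.
Qed.

Lemma partn2_perm p t (h : {ffun 'I_p -> 'I_2}) : size t = p ->
  perm_eq (partn t h ord0 ++ partn t h ord_max) t.
Proof.
move=> e; rewrite /partn -map_cat.
rewrite (@eq_filter _ (fun j => h j == ord_max) (predC (fun j => h j == ord0)));
  last by move=> j; rewrite /= ord2_eq_max.
by rewrite -[X in perm_eq _ X](map_nth_ord_enum 0 e); apply: perm_map; rewrite perm_filterC.
Qed.

Lemma partn2_size p t (h : {ffun 'I_p -> 'I_2}) : size t = p ->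
  (size (partn t h ord0) + size (partn t h ord_max))%N = p.
Proof. by move=> e; rewrite -size_cat (perm_size (partn2_perm h e)). Qed.

Section PartsOfCons.
Variables (s1 s2 : seq V) (m : nat).
Let p := (size s1 + (size s2).+1)%N.

Lemma size_lt_cat_cons : (size s1 < p)%N. Proof. by rewrite /p addnS ltnS leq_addr. Qed.
Definition mid_index : 'I_p := Ordinal size_lt_cat_cons.

Lemma partn_cons_other (f : {ffun 'I_p -> 'I_m}) i z z' : i != f mid_index ->
  partn (s1 ++ z :: s2) f i = partn (s1 ++ z' :: s2) f i.
Proof.
move=> hi; apply/eq_in_map => j; rewrite mem_filter => /andP [/eqP hj _].
apply: nth_cat_cons_other; apply: contra hi => /eqP e.
by rewrite -hj; apply/eqP; congr (f _); apply: val_inj.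
Qed.

Lemma partn_cons_mid (f : {ffun 'I_p -> 'I_m}) :
  exists P1 P2, forall z, partn (s1 ++ z :: s2) f (f mid_index) = P1 ++ z :: P2.
Proof.
have := @map_split_at _ _ _ [seq j <- enum 'I_p | f j == f mid_index] mid_index
  (fun z (j : 'I_p) => nth 0 (s1 ++ z :: s2) (val j)) 0.
rewrite filter_uniq ?enum_uniq // mem_filter eqxx mem_enum => /(_ isT isT).
case=> [i z hi|P1 [P2 hP]].
  by apply: nth_cat_cons_other; apply: contra hi => /eqP e; apply/eqP/val_inj.
by exists P1, P2 => z; rewrite /partn hP /= nth_cat_cons_size.
Qed.

Lemma Fp_term_linear1 F L q t : (forall b, sym_multilinear (fun a => F a b)) ->
  sym_multilinear L -> forall (a : k) x y,
  Fp_term F L p (s1 ++ (a *: x + y) :: s2) q t m =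
  a *: Fp_term F L p (s1 ++ x :: s2) q t m + Fp_term F L p (s1 ++ y :: s2) q t m.
Proof.
move=> hF hL a x y; rewrite /Fp_term scaler_sumr -big_split; apply: eq_bigr => f _.
rewrite scaler_sumr -big_split; apply: eq_bigr => g _ /=.
have [P1 [P2 hP]] := partn_cons_mid f.
have := @map_split_at _ _ _ (enum 'I_m) (f mid_index)
  (fun z i => F (partn (s1 ++ z :: s2) f i) (partn t g i)) 0.
rewrite enum_uniq mem_enum => /(_ isT isT).
case=> [i z hi|Q1 [Q2 hQ]]; first by rewrite (partn_cons_other z 0 hi).
by rewrite !hQ !hP (hF _).2 hL.2.
Qed.
End PartsOfCons.

Lemma Fp_term_linearL F L L1 L2 p s q t m (a : k) :
  (forall w, L w = a *: L1 w + L2 w) ->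
  Fp_term F L p s q t m = a *: Fp_term F L1 p s q t m + Fp_term F L2 p s q t m.
Proof.
move=> hL; rewrite /Fp_term scaler_sumr -big_split; apply: eq_bigr => f _.
by rewrite scaler_sumr -big_split; apply: eq_bigr => g _ /=.
Qed.

Lemma Fp_term_perm1 F L p s s' q t m (sg : {perm 'I_p}) :
  (forall b, sym_multilinear (fun a => F a b)) ->
  (forall j : 'I_p, nth 0 s' j = nth 0 s (sg j)) ->
  Fp_term F L p s' q t m = Fp_term F L p s q t m.
Proof.
move=> hF hs; rewrite /Fp_term [RHS](reindex_inj (@ffun_perm_inj p _ sg)).
apply: eq_bigr => f _; apply: eq_bigr => g _; congr L; apply: eq_map => i.
exact/(hF _).1/partn_perm.
Qed.

Lemma eq_Fp_term F F' L L' p s q t m :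
  (forall a b, (size a <= p)%N -> (size b <= q)%N -> F a b = F' a b) ->
  (forall w, size w = m -> L w = L' w) ->
  Fp_term F L p s q t m = Fp_term F' L' p s q t m.
Proof.
move=> hF hL; apply: eq_bigr => f _; apply: eq_bigr => g _.
rewrite hL; last by rewrite size_map -?enumT size_enum_ord.
by apply: congr1; apply: eq_map => i; apply: hF; apply: partn_size.
Qed.

Lemma Fp_lin_swap F L s t : Fp_lin F L s t = Fp_lin (fun a b => F b a) L t s.
Proof.
rewrite !Fp_linE addnC; apply: eq_bigr => m _; congr (_ *: _).
by rewrite /Fp_term exchange_big.
Qed.

Lemma eq_Fp_lin F F' L L' s t :
  (forall a b, (size a <= size s)%N -> (size b <= size t)%N -> F a b = F' a b) ->
  (forall w, (size w <= size s + size t)%N -> L w = L' w) ->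
  Fp_lin F L s t = Fp_lin F' L' s t.
Proof.
move=> hF hL; rewrite !Fp_linE; apply: eq_bigr => m _; congr (_ *: _).
by apply: eq_Fp_term => // w e; apply: hL; rewrite e -ltnS.
Qed.

Lemma eq_Fp_linL F L L' s t : L =1 L' -> Fp_lin F L s t = Fp_lin F L' s t.
Proof. by move=> hL; apply: eq_Fp_lin. Qed.

Lemma Fp_lin0 F s t : Fp_lin F (fun _ => 0) s t = 0.
Proof.
rewrite Fp_linE big1 // => m _; rewrite /Fp_term big1 ?scaler0 // => f _.
by rewrite big1.
Qed.

Lemma Fp_lin_linearL F L L1 L2 s t (a : k) :
  (forall w, L w = a *: L1 w + L2 w) ->
  Fp_lin F L s t = a *: Fp_lin F L1 s t + Fp_lin F L2 s t.
Proof.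
move=> hL; rewrite !Fp_linE scaler_sumr -big_split; apply: eq_bigr => m _.
by rewrite (Fp_term_linearL _ _ _ _ _ _ hL) scalerDr !scalerA mulrC.
Qed.

Lemma Fp_lin_linear1 F L : (forall b, sym_multilinear (fun a => F a b)) ->
  sym_multilinear L -> forall s1 s2 t (a : k) x y,
  Fp_lin F L (s1 ++ (a *: x + y) :: s2) t =
  a *: Fp_lin F L (s1 ++ x :: s2) t + Fp_lin F L (s1 ++ y :: s2) t.
Proof.
move=> hF hL s1 s2 t a x y; rewrite !Fp_linE !size_cat /=.
rewrite scaler_sumr -big_split; apply: eq_bigr => m _.
by rewrite (Fp_term_linear1 _ _ _ _ _ hF hL) scalerDr !scalerA mulrC.
Qed.

Lemma Fp_lin_linear2 F L : (forall a, sym_multilinear (fun b => F a b)) ->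
  sym_multilinear L -> forall s t1 t2 (a : k) x y,
  Fp_lin F L s (t1 ++ (a *: x + y) :: t2) =
  a *: Fp_lin F L s (t1 ++ x :: t2) + Fp_lin F L s (t1 ++ y :: t2).
Proof.
move=> hF hL s t1 t2 a x y.
by rewrite !(Fp_lin_swap F) (@Fp_lin_linear1 (fun a b => F b a) L hF hL).
Qed.

Lemma Fp_lin_perm1 F L : (forall b, sym_multilinear (fun a => F a b)) ->
  forall s s' t, perm_eq s s' -> Fp_lin F L s t = Fp_lin F L s' t.
Proof.
move=> hF s s' t hp; have [sg hsg] := perm_eq_nth_perm 0 hp.
rewrite !Fp_linE -(perm_size hp); apply: eq_bigr => m _.
by congr (_ *: _); symmetry; apply: Fp_term_perm1 hF hsg.
Qed.

Lemma Fp_lin_perm2 F L : (forall a, sym_multilinear (fun b => F a b)) ->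
  forall s t t', perm_eq t t' -> Fp_lin F L s t = Fp_lin F L s t'.
Proof.
move=> hF s t t' hp.
by rewrite !(Fp_lin_swap F) (@Fp_lin_perm1 (fun a b => F b a) L hF _ _ _ hp).
Qed.

Section TopDegree.
Variables (E : seq V -> seq V -> V) (L : seq V -> V) (a b : seq V).
Hypotheses (E00 : E [::] [::] = 0) (E10 : forall x, E [:: x] [::] = x)
  (E01 : forall x, E [::] [:: x] = x) (hL : sym_multilinear L).
Let p := size a.
Let q := size b.
Let n := (p + q)%N.

Definition ffun_lpart (c : {ffun 'I_n -> 'I_n}) : {ffun 'I_p -> 'I_n} :=
  [ffun j => c (lshift q j)].
Definition ffun_rpart (c : {ffun 'I_n -> 'I_n}) : {ffun 'I_q -> 'I_n} :=
  [ffun j => c (rshift p j)].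
Definition ffun_glue (fg : {ffun 'I_p -> 'I_n} * {ffun 'I_q -> 'I_n}) :
  {ffun 'I_n -> 'I_n} :=
  [ffun j => match split j with inl j1 => fg.1 j1 | inr j2 => fg.2 j2 end].

Lemma ffun_split_bij : bijective (fun c => (ffun_lpart c, ffun_rpart c)).
Proof.
exists ffun_glue.
  move=> c; apply/ffunP => j; rewrite !ffunE.
  by case: split_ordP => [j1 ->|j2 ->]; rewrite /= ffunE.
move=> [f g]; congr (_, _); apply/ffunP => j; rewrite !ffunE.
  by have := unsplitK (inl j : 'I_p + 'I_q) => /= ->.
by have := unsplitK (inr j : 'I_p + 'I_q) => /= ->.
Qed.

Lemma top_term_nonsurj (c : {ffun 'I_n -> 'I_n}) i : (forall j, c j != i) ->
  E (partn a (ffun_lpart c) i) (partn b (ffun_rpart c) i) = 0.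
Proof. by move=> hc; rewrite !partn_nil // => j; rewrite ffunE. Qed.

Lemma top_term_inj (c : {ffun 'I_n -> 'I_n}) (injc : injective c) i :
  E (partn a (ffun_lpart c) i) (partn b (ffun_rpart c) i) =
  nth 0 (a ++ b) (invF injc i).
Proof.
set j := invF injc i; have ci : c j = i by apply: f_invF.
case: (split_ordP j) => [j1 ej | j2 ej].
  rewrite (@partn_nil _ _ _ (ffun_rpart c)); last first.
    by move=> j'; rewrite ffunE -ci ej (inj_eq injc) eq_rlshift.
  rewrite /partn (@eq_filter _ _ (pred1 j1)); last first.
    by move=> j'; rewrite /= ffunE -ci ej (inj_eq injc) eq_lshift.
  by rewrite filter_pred1_uniq ?enum_uniq ?mem_enum //= E10 ej nth_cat /= ltn_ord.
rewrite (@partn_nil _ _ _ (ffun_lpart c)); last first.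
  by move=> j'; rewrite ffunE -ci ej (inj_eq injc) eq_lrshift.
rewrite /partn (@eq_filter _ _ (pred1 j2)); last first.
  by move=> j'; rewrite /= ffunE -ci ej (inj_eq injc) eq_rshift.
rewrite filter_pred1_uniq ?enum_uniq ?mem_enum //= E01 ej nth_cat /=.
by rewrite ltnNge leq_addr /= addKn.
Qed.

(* Only the bijections c of 'I_n contribute, each one L (a ++ b). *)
Lemma Fp_term_top : Fp_term E L p a q b n = (n`!)%:R *: L (a ++ b).
Proof.
rewrite /Fp_term pair_bigA /= (reindex _ (onW_bij _ ffun_split_bij)) /=.
rewrite (bigID (fun c : {ffun 'I_n -> 'I_n} => injectiveb c)) /=.
rewrite [X in _ + X]big1 ?addr0; last first.
  move=> c ninj; case: (pickP (fun i => [forall j, c j != i])) => [i /forallP hi|hnone].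
    apply: (sym_multilinear_mem0 hL); apply/mapP; exists i; first by rewrite mem_enum.
    by rewrite top_term_nonsurj.
  case/negP: ninj; apply/injectiveP => x y; apply: (@image_injP _ _ c 'I_n) => //.
  rewrite -/(codom c) card_ord; apply/eqP; rewrite -[RHS](card_ord n).
  apply: eq_card => i; rewrite inE; have := hnone i; move/negbT.
  rewrite negb_forall => /existsP [j]; rewrite negbK => /eqP <-; exact: codom_f.
rewrite (eq_bigr (fun _ => L (a ++ b))); last first.
  move=> c /injectiveP injc; rewrite (eq_map (top_term_inj injc)); apply: hL.1.
  have hperm : perm_eq (map (invF injc) (enum 'I_n)) (enum 'I_n).
    apply: uniq_perm; rewrite ?(map_inj_uniq (can_inj (f_invF injc))) ?enum_uniq //.
    move=> j; rewrite mem_enum; apply/mapP; exists (c j); rewrite ?mem_enum //.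
    by rewrite invF_f.
  rewrite (map_comp (fun j : 'I_n => nth 0 (a ++ b) (val j)) (invF injc)).
  by apply: (perm_trans (perm_map _ hperm)); rewrite map_nth_ord_enum // size_cat.
apply: (etrans (sumr_const [pred c : {ffun 'I_n -> 'I_n} | injectiveb c] _)).
have -> : #|[pred c : {ffun 'I_n -> 'I_n} | injectiveb c]| =
    #|[set c : {ffun 'I_n -> 'I_n} | injectiveb c]| by apply: eq_card => c; rewrite inE.
by rewrite card_inj_ffuns card_ord ffactnn scaler_nat.
Qed.

End TopDegree.

Lemma Fp_term_nil_lt F L p s t m : sym_multilinear L ->
  (forall x, F x [::] = piV x) -> (m < p)%N -> Fp_term F L p s 0 t m = 0.
Proof.
move=> hL hF hm; rewrite /Fp_term big1 // => f _; apply: big1 => g _.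
have : ~~ injectiveb f.
  apply/negP => /injectiveP /leq_card; rewrite !card_ord => hpm.
  by move: (leq_trans hm hpm); rewrite ltnn.
case/injectivePn => j1 [j2 hj e].
apply: (sym_multilinear_mem0 hL); apply/mapP; exists (f j1); first by rewrite mem_enum.
rewrite (@partn_nil 0 _ _ g); last by case.
rewrite hF piV_size_ge2 // size_map.
have -> : (2 = size [:: j1; j2])%N by [].
apply: uniq_leq_size; first by rewrite /= inE hj.
by move=> j; rewrite !inE mem_filter mem_enum => /orP [] /eqP ->; rewrite ?e eqxx.
Qed.

Lemma sum_ffun_ord1 p (T : {ffun 'I_p -> 'I_1} -> V) : \sum_f T f = T [ffun => ord0].
Proof.
rewrite (big_pred1 [ffun => ord0]) // => f /=; symmetry; apply/eqP/ffunP => j.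
by rewrite ffunE; apply: ord1.
Qed.

Lemma Fp_term_piV F s t m :
  Fp_term F (@piV _ V) (size s) s (size t) t m = if m == 1%N then F s t else 0.
Proof.
case: m => [|[|m]] /=.
- by rewrite /Fp_term big1 // => f _; rewrite big1 // => g _; rewrite enum_ord0.
- rewrite /Fp_term !sum_ffun_ord1 enum_ordSl enum_ord0 /=.
  by rewrite !partn_const // => j; rewrite ffunE.
- rewrite /Fp_term big1 // => f _; rewrite big1 // => g _.
  by rewrite piV_eq0 // size_map size_enum_ord.
Qed.

Lemma Fp_lin_piV F s t : F [::] [::] = 0 -> Fp_lin F (@piV _ V) s t = F s t.
Proof.
move=> hF; rewrite Fp_linE.
under eq_bigr => i _ do rewrite Fp_term_piV.
case e: (size s + size t)%N => [|n].
  rewrite big_ord1 /= scaler0.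
  by move/eqP: e; rewrite addn_eq0 => /andP [/eqP/size0nil -> /eqP/size0nil ->].
rewrite big_ord_recl big_ord_recl /= big1 ?addr0 ?scaler0 ?add0r ?invr1 ?scale1r //.
by move=> i _; rewrite scaler0.
Qed.

Definition ralt_lhs F s p t (h : {ffun 'I_p -> 'I_2}) :=
  Fp_lin F (fun w => F w (partn t h ord_max)) s (partn t h ord0).
Definition ralt_rhs F s p t (h : {ffun 'I_p -> 'I_2}) :=
  Fp_lin F (fun w => F s w) (partn t h ord0) (partn t h ord_max).
Definition ralt_defectn F s p t :=
  \sum_(h : {ffun 'I_p -> 'I_2}) (ralt_lhs F s t h - ralt_rhs F s t h).
Definition ralt_defect F s t := ralt_defectn F s (size t) t.

Lemma right_alternativeP F : right_alternative F <-> forall s t, ralt_defect F s t = 0.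
Proof.
rewrite /ralt_defect /ralt_defectn.
split=> H s t; first by rewrite sumrB; apply/eqP; rewrite subr_eq0; apply/eqP/H.
by apply/eqP; rewrite -subr_eq0 -sumrB; apply/eqP/H.
Qed.

Lemma ralt_defect_local F F' s t :
  (forall a b, (size b <= size t)%N -> F a b = F' a b) ->
  ralt_defect F s t = ralt_defect F' s t.
Proof.
move=> hFF'; apply: eq_bigr => h _.
have hs := partn2_size h (erefl (size t)).
have s0 := partn_size t h ord0; have s1 := partn_size t h ord_max.
congr (_ - _); apply: eq_Fp_lin => [a b _ hb|w hw]; apply: hFF' => //.
- exact: leq_trans hb _.
- exact: leq_trans hb _.
- by rewrite hs in hw.
Qed.

Lemma ralt_defect_linear1 F t : bilin_on_kV F ->
  sym_multilinear (fun s => ralt_defect F s t).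
Proof.
move=> hB; split.
  move=> s s' hp; apply: eq_bigr => h _; congr (_ - _).
    exact: (Fp_lin_perm1 _ hB.1).
  by apply: eq_Fp_linL => w; apply: (hB.1 w).1.
move=> s1 s2 a x y; rewrite /ralt_defect /ralt_defectn scaler_sumr -big_split.
apply: eq_bigr => h _ /=.
rewrite /ralt_lhs /ralt_rhs (Fp_lin_linear1 hB.1 (hB.1 _)).
rewrite (@Fp_lin_linearL F (fun w => F (s1 ++ (a *: x + y) :: s2) w)
  (fun w => F (s1 ++ x :: s2) w) (fun w => F (s1 ++ y :: s2) w) _ _ a);
  last by move=> w; apply: (hB.1 w).2.
by rewrite opprD addrACA scalerBr.
Qed.

Lemma ralt_defect_perm2 F s : bilin_on_kV F ->
  forall t t', perm_eq t t' -> ralt_defect F s t = ralt_defect F s t'.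
Proof.
move=> hB t t' hp; have [sg hsg] := perm_eq_nth_perm 0 hp.
rewrite /ralt_defect -(perm_size hp) /ralt_defectn.
rewrite [LHS](reindex_inj (@ffun_perm_inj _ _ sg)).
apply: eq_bigr => h _ /=; symmetry.
have pe := fun i => @partn_perm _ t t' sg 2 h i hsg.
congr (_ - _).
  rewrite /ralt_lhs (Fp_lin_perm2 _ hB.2 s (pe ord0)); apply: eq_Fp_linL => w.
  exact: (hB.2 w).1 (pe ord_max).
by rewrite /ralt_rhs (Fp_lin_perm1 _ hB.1 _ (pe ord0)) (Fp_lin_perm2 _ hB.2 _ (pe ord_max)).
Qed.

Lemma ralt_defect_linear2 F s : bilin_on_kV F ->
  sym_multilinear (fun t => ralt_defect F s t).
Proof.
move=> hB; split; first exact: ralt_defect_perm2.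
move=> t1 t2 a x y; rewrite /ralt_defect /ralt_defectn !size_cat /=.
rewrite scaler_sumr -big_split; apply: eq_bigr => h _ /=.
have [P1 [P2 hP]] := @partn_cons_mid t1 t2 _ h.
have scaleB (X Y X' Y' : V) : (a *: X + Y) - (a *: X' + Y') = a *: (X - X') + (Y - Y').
  by rewrite opprD addrACA scalerBr.
case: (boolP (h (mid_index t1 t2) == ord0)) => hj.
  rewrite (eqP hj) in hP; have hne : ord_max != h (mid_index t1 t2) by rewrite (eqP hj).
  rewrite /ralt_lhs /ralt_rhs !hP !(partn_cons_other _ 0 hne).
  by rewrite (Fp_lin_linear2 hB.2 (hB.1 _)) (Fp_lin_linear1 hB.1 (hB.2 _)) scaleB.
have hj' : h (mid_index t1 t2) = ord_max by apply/eqP; rewrite ord2_eq_max.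
rewrite hj' in hP; have hne : ord0 != h (mid_index t1 t2) by rewrite hj'.
rewrite /ralt_lhs /ralt_rhs !hP !(partn_cons_other _ 0 hne).
rewrite (Fp_lin_linear2 hB.2 (hB.2 _)).
rewrite (@Fp_lin_linearL F (fun w => F w (P1 ++ (a *: x + y) :: P2))
  (fun w => F w (P1 ++ x :: P2)) (fun w => F w (P1 ++ y :: P2)) _ _ a) ?scaleB //.
by move=> w; apply: (hB.2 w).2.
Qed.

Definition trunc n F : seq V -> seq V -> V :=
  fun a b => if (size b < n)%N then F a b else 0.

Section CharZero.
Hypothesis chark0 : [pchar k] =i pred0.

Lemma natf_neq0 n : (n%:R != 0 :> k) = (n != 0)%N.
Proof. by rewrite ((pcharf0P _).1 chark0). Qed.

Lemma fact_neq0 n : n`!%:R != 0 :> k.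
Proof. by rewrite natf_neq0 -lt0n fact_gt0. Qed.

Lemma natf_exp2_sub2_neq0 n : (2 <= n)%N -> (2 ^ n - 2)%N%:R != 0 :> k.
Proof.
move=> hn; rewrite natf_neq0 subn_eq0 -ltnNge.
by rewrite -[X in (X < _)%N]/(2 ^ 1)%N ltn_exp2l.
Qed.

Lemma Fp_lin_nilr F L s : sym_multilinear L ->
  (forall x, F x [::] = piV x) -> (forall x, F [::] [:: x] = x) ->
  Fp_lin F L s [::] = L s.
Proof.
move=> hL hF0 hF1; rewrite Fp_linE /= addn0 big_ord_recr /= big1 ?add0r; last first.
  by move=> i _; rewrite Fp_term_nil_lt ?scaler0.
have := @Fp_term_top F L s [::] (hF0 [::]) (fun x => hF0 [:: x]) hF1 hL.
by rewrite /= addn0 cats0 => ->; rewrite scalerA mulVf ?fact_neq0 ?scale1r.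
Qed.

Lemma Fp_lin_nill F L t : sym_multilinear L ->
  (forall x, F [::] x = piV x) -> (forall x, F [:: x] [::] = x) ->
  Fp_lin F L [::] t = L t.
Proof.
by move=> hL h1 h2; rewrite Fp_lin_swap (Fp_lin_nilr (F := fun a b => F b a) _ hL h1 h2).
Qed.

Section Unital.
Variable F : seq V -> seq V -> V.
Hypothesis hU : unital_formal_mul F.

Lemma ralt_trivial_split s a b : a = [::] \/ b = [::] ->
  Fp_lin F (fun w => F w b) s a = Fp_lin F (fun w => F s w) a b.
Proof.
case: hU => hB h00 hs0 h0s [->|->].
  rewrite (Fp_lin_nilr s (hB.1 b) hs0 (fun x => h0s [:: x])).
  by rewrite (Fp_lin_nill b (hB.2 s) h0s (fun x => hs0 [:: x])).
rewrite (@eq_Fp_linL F _ (@piV _ V)) ?Fp_lin_piV //.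
by rewrite (Fp_lin_nilr a (hB.2 s) hs0 (fun x => h0s [:: x])).
Qed.

Lemma ralt_defect_size_le1 s t : (size t <= 1)%N -> ralt_defect F s t = 0.
Proof.
move=> ht; apply: big1 => h _; apply/eqP; rewrite subr_eq0; apply/eqP.
apply: ralt_trivial_split; have := partn2_size h (erefl (size t)).
case: (partn t h ord0) => [|x a]; first by left.
case: (partn t h ord_max) => [|y b]; first by right.
by move=> e; move: ht; rewrite -e /= addnS ltnS.
Qed.

Lemma ralt_defect_nil t : ralt_defect F [::] t = 0.
Proof.
case: hU => hB h00 hs0 h0s; apply: big1 => h _; apply/eqP; rewrite subr_eq0; apply/eqP.
rewrite /ralt_lhs /ralt_rhs (Fp_lin_nill _ (hB.1 _) h0s (fun x => hs0 [:: x])).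
by rewrite (@eq_Fp_linL F _ (@piV _ V)) ?Fp_lin_piV.
Qed.

Section TopComponent.
Variables (s t : seq V).
Let n := size t.
Hypothesis ht : (2 <= n)%N.
Let tF := trunc n F.

Lemma ralt_rhs_trunc (h : {ffun 'I_n -> 'I_2}) : ralt_rhs F s t h = ralt_rhs tF s t h + F s t.
Proof.
case: hU => hB h00 hs0 h0s.
have hab := partn2_size h (erefl n).
have sa := partn_size t h ord0; have sb := partn_size t h ord_max.
rewrite /ralt_rhs !Fp_linE !big_ord_recr /= -addrA; congr (_ + _).
  apply: eq_bigr => i _; congr (_ *: _); apply: eq_Fp_term => [a b ha hb|w hw].
    rewrite /tF /trunc; case: ltnP => // hb'.
    have /size0nil -> : size a = 0%N by lia.
    by rewrite h0s piV_size_ge2 // (leq_trans ht).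
  have hi : (i < n)%N by apply: (leq_trans (ltn_ord i)); rewrite hab.
  by rewrite /tF /trunc hw hi.
rewrite (Fp_term_top _ _ h00 (fun x => hs0 [:: x]) (fun x => h0s [:: x]) (hB.2 s)).
rewrite scalerA mulVf ?fact_neq0 // scale1r ((hB.2 s).1 _ _ (partn2_perm h (erefl n))).
rewrite /Fp_term big1 ?scaler0 ?add0r // => f _; rewrite big1 // => g _.
have hN : ~~ (size (partn t h ord0) + size (partn t h ord_max) < n)%N by rewrite hab ltnn.
by rewrite /tF /trunc size_map -?enumT size_enum_ord (negbTE hN).
Qed.

Lemma sum_ralt_lhs_trunc :
  \sum_(h : {ffun 'I_n -> 'I_2}) ralt_lhs F s t h =
  \sum_(h : {ffun 'I_n -> 'I_2}) ralt_lhs tF s t h + 2%:R *: F s t.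
Proof.
case: hU => hB h00 hs0 h0s.
pose h0 : {ffun 'I_n -> 'I_2} := [ffun => ord0].
pose h1 : {ffun 'I_n -> 'I_2} := [ffun => ord_max].
have h10 : h1 != h0 by apply/eqP => /ffunP /(_ (Ordinal (ltnW ht))); rewrite !ffunE.
have e0 : partn t h0 ord0 = t by apply: partn_const => // j; rewrite ffunE.
have e1 : partn t h0 ord_max = [::] by apply: partn_nil => j; rewrite ffunE.
have e0' : partn t h1 ord0 = [::] by apply: partn_nil => j; rewrite ffunE.
have e1' : partn t h1 ord_max = t by apply: partn_const => // j; rewrite ffunE.
have tF_nil w : tF w [::] = piV w by rewrite /tF /trunc /= (ltnW ht).
have lhs_h0 : ralt_lhs F s t h0 = F s t.
  by rewrite /ralt_lhs e0 e1 (@eq_Fp_linL F _ (@piV _ V)) ?Fp_lin_piV.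
have lhs_h0_trunc : ralt_lhs tF s t h0 = 0.
  rewrite /ralt_lhs e0 e1 (@eq_Fp_linL tF _ (@piV _ V)) ?Fp_lin_piV ?tF_nil //.
  by rewrite /tF /trunc ltnn.
have lhs_h1 : ralt_lhs F s t h1 = F s t.
  by rewrite /ralt_lhs e0' e1' (Fp_lin_nilr s (hB.1 t) hs0) // => x; rewrite h0s.
have lhs_h1_trunc : ralt_lhs tF s t h1 = 0.
  rewrite /ralt_lhs e0' e1' -(Fp_lin0 tF s [::]); apply: eq_Fp_linL => w.
  by rewrite /tF /trunc ltnn.
have lhs_other h : h != h0 -> h != h1 -> ralt_lhs F s t h = ralt_lhs tF s t h.
  move=> hh0 hh1.
  have lt0 : (size (partn t h ord0) < n)%N.
    rewrite ltn_neqAle partn_size andbT; apply: contra hh0 => /eqP e.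
    by apply/eqP/ffunP => j; rewrite ffunE; exact: partn_size_const e j.
  have lt1 : (size (partn t h ord_max) < n)%N.
    rewrite ltn_neqAle partn_size andbT; apply: contra hh1 => /eqP e.
    by apply/eqP/ffunP => j; rewrite ffunE; exact: partn_size_const e j.
  rewrite /ralt_lhs; apply: eq_Fp_lin => [a b _ hb|w _].
    by rewrite /tF /trunc (leq_ltn_trans hb lt0).
  by rewrite /tF /trunc lt1.
rewrite (bigD1 h0) //= (bigD1 h1) /=; last by rewrite h10.
rewrite [in RHS](bigD1 h0) //= [in RHS](bigD1 h1) /=; last by rewrite h10.
rewrite lhs_h0 lhs_h1 lhs_h0_trunc lhs_h1_trunc !add0r.
rewrite (eq_bigr (fun h => ralt_lhs tF s t h)); last by move=> h /andP [? ?]; apply: lhs_other.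
by rewrite scaler_nat mulr2n addrA addrC.
Qed.

Lemma ralt_defect_trunc :
  ralt_defect tF s t = ralt_defect F s t + (2 ^ n - 2)%N%:R *: F s t.
Proof.
rewrite /ralt_defect /ralt_defectn !sumrB sum_ralt_lhs_trunc.
rewrite (eq_bigr _ (fun h _ => ralt_rhs_trunc h)) big_split /=.
rewrite sumr_const card_ffun !card_ord -scaler_nat natrB; last first.
  by rewrite -[X in (X <= _)%N]/(2 ^ 1)%N leq_pexp2l // ltnW.
by rewrite scalerBl opprD -addrA subrKA addrACA subrr addr0.
Qed.

End TopComponent.
End Unital.

Section Construction.
Variable F : seq V -> seq V -> V.
Hypothesis hU : unital_formal_mul F.

(* The component of degree n.+2 is chosen so that ralt_defect_trunc makes
   the defect vanish in that degree. *)
Fixpoint ralt_approx n : seq V -> seq V -> V :=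
  match n with
  | 0 => trunc 2 F
  | n'.+1 => fun s t =>
      if size t == n'.+2 then (2 ^ n'.+2 - 2)%N%:R^-1 *: ralt_defect (ralt_approx n') s t
      else ralt_approx n' s t
  end.

Lemma ralt_approxS n a b : size b != n.+2 -> ralt_approx n.+1 a b = ralt_approx n a b.
Proof. by move=> h; rewrite /= (negbTE h). Qed.

Lemma ralt_approx_unital n : unital_formal_mul (ralt_approx n).
Proof.
case: hU => hB h00 hs0 h0s.
elim: n => [|n [hB' h00' hs0' h0s']].
  split.
  - split=> t; last exact: (sym_multilinear_if_size (fun m => m < 2)%N (hB.2 t) sym_multilinear0).
    by rewrite /= /trunc; case: (size t < 2)%N; [exact: (hB.1 t)|exact: sym_multilinear0].
  - by [].
  - by move=> s; rewrite /= /trunc /= hs0.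
  - by move=> t; rewrite /= /trunc h0s; case: ltnP => // ht; rewrite piV_size_ge2.
split.
- split=> t.
    rewrite /=; case: (size t == n.+2); last exact: hB'.1.
    exact/sym_multilinearZ/ralt_defect_linear1.
  apply: (sym_multilinear_if_size (fun m => m == n.+2) _ (hB'.2 t)).
  exact/sym_multilinearZ/ralt_defect_linear2.
- by [].
- by move=> s; rewrite /= hs0'.
- move=> t; rewrite /=; case: eqP => ht; last exact: h0s'.
  by rewrite ralt_defect_nil // scaler0 piV_size_ge2 // ht.
Qed.

Lemma ralt_approx_high n a b : (n.+1 < size b)%N -> ralt_approx n a b = 0.
Proof.
elim: n => [|n IH] hb; first by rewrite /= /trunc ltnNge hb.
by rewrite ralt_approxS ?IH ?(ltnW hb) // neq_ltn hb orbT.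
Qed.

Lemma ralt_approx_low n a b : (size b <= 1)%N -> ralt_approx n a b = F a b.
Proof.
move=> hb; elim: n => [|n IH]; first by rewrite /= /trunc (leq_ltn_trans hb).
by rewrite ralt_approxS // neq_ltn (leq_ltn_trans hb).
Qed.

Lemma ralt_approx_stable j m a b : (size b <= j.+1)%N -> (j <= m)%N ->
  ralt_approx j a b = ralt_approx m a b.
Proof.
move=> hb; elim: m => [|m IH]; first by rewrite leqn0 => /eqP ->.
rewrite leq_eqVlt => /orP [/eqP -> //|hj].
by rewrite ralt_approxS ?IH // neq_ltn (leq_ltn_trans hb) // ltnS.
Qed.

Lemma ralt_approx_defect0 n s t : (size t <= n.+1)%N -> ralt_defect (ralt_approx n) s t = 0.
Proof.
elim: n s t => [|n IH] s t ht; first exact: ralt_defect_size_le1 (ralt_approx_unital 0) _ _ ht.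
case: (boolP (size t == n.+2)) => hs; last first.
  have htn : (size t <= n.+1)%N by move: ht; rewrite leq_eqVlt (negbTE hs).
  rewrite (@ralt_defect_local _ (ralt_approx n)) ?IH //.
  by move=> a b hb; apply: ralt_approxS; rewrite neq_ltn (leq_ltn_trans hb) // ltnS.
have ht2 : (2 <= size t)%N by rewrite (eqP hs).
have := ralt_defect_trunc (ralt_approx_unital n.+1) s ht2.
have -> : ralt_approx n.+1 s t = (2 ^ n.+2 - 2)%N%:R^-1 *: ralt_defect (ralt_approx n) s t.
  by rewrite /= hs.
rewrite (eqP hs) scalerA mulfV ?scale1r ?natf_exp2_sub2_neq0 //.
rewrite (@ralt_defect_local (trunc n.+2 (ralt_approx n.+1)) (ralt_approx n) s t).
  by move/esym/(canRL (addrK _)); rewrite subrr.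
move=> a b hb; rewrite /trunc; case: ifP => hb'.
  by rewrite ralt_approxS // neq_ltn hb'.
by rewrite ralt_approx_high // ltnNge -ltnS hb'.
Qed.

Definition ralt_of s t := ralt_approx (size t) s t.

Lemma ralt_of_unital : unital_formal_mul ralt_of.
Proof.
split.
- split=> t; first by case: (ralt_approx_unital (size t)) => hB _ _ _; exact: hB.1 t.
  split.
    move=> u u' hp; rewrite /ralt_of -(perm_size hp).
    by case: (ralt_approx_unital (size u)) => hB _ _ _; exact: (hB.2 t).1.
  move=> t1 t2 a x y; rewrite /ralt_of !size_cat /=.
  by case: (ralt_approx_unital (size t1 + (size t2).+1)) => hB _ _ _; exact: (hB.2 t).2.
- by case: (ralt_approx_unital 0).
- by move=> s; case: (ralt_approx_unital 0) => _ _ h _; exact: h.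
- by move=> s; case: (ralt_approx_unital (size s)) => _ _ _ h; exact: h.
Qed.

Lemma ralt_of_similar : similar_fm ralt_of F.
Proof. by move=> s y; rewrite /ralt_of ralt_approx_low. Qed.

Lemma ralt_of_right_alternative : right_alternative ralt_of.
Proof.
apply/right_alternativeP => s t.
rewrite (@ralt_defect_local _ (ralt_approx (size t))) ?ralt_approx_defect0 //.
by move=> a b hb; rewrite /ralt_of (@ralt_approx_stable (size b) (size t)).
Qed.

End Construction.

Lemma right_alternative_similar_eq F1 F2 :
  unital_formal_mul F1 -> right_alternative F1 ->
  unital_formal_mul F2 -> right_alternative F2 ->
  similar_fm F1 F2 -> forall s t, F1 s t = F2 s t.
Proof.
move=> hU1 /right_alternativeP hR1 hU2 /right_alternativeP hR2 hsim s t.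
elim: (size t) {-2}t s (leqnn (size t)) => [|n IH] u s hu.
  move: hu; rewrite leqn0 => /nilP ->.
  by case: hU1 => _ _ -> _; case: hU2 => _ _ -> _.
have [hun|hun] := boolP (size u <= n)%N; first exact: IH.
have hu1 : size u = n.+1 by apply/eqP; rewrite eqn_leq hu ltnNge hun.
case: n IH {hu hun} hu1 => [|n] IH hu1.
  by case: u hu1 => [|y [|]] //= _; apply: hsim.
have ht2 : (2 <= size u)%N by rewrite hu1.
have e1 := ralt_defect_trunc hU1 s ht2; have e2 := ralt_defect_trunc hU2 s ht2.
rewrite hR1 add0r in e1; rewrite hR2 add0r in e2.
apply: (scalerI (natf_exp2_sub2_neq0 ht2)); rewrite -e1 -e2.
apply: ralt_defect_local => a b hb; rewrite /trunc.
by case: ltnP => // hb'; apply: IH; rewrite -ltnS -hu1.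
Qed.

End CharZero.
End FormalMulTheory.

Theorem mainTheorem4 (k : fieldType) (chark0 : [pchar k] =i pred0)
  (V : lmodType k) (F : seq V -> seq V -> V) :
  unital_formal_mul F ->
  exists F0 : seq V -> seq V -> V,
    [/\ unital_formal_mul F0, right_alternative F0 & similar_fm F0 F] /\
    (forall F1 : seq V -> seq V -> V,
       unital_formal_mul F1 -> right_alternative F1 -> similar_fm F1 F ->
       forall s t, F1 s t = F0 s t).
Proof.
move=> hU; exists (ralt_of F).
have U0 := ralt_of_unital chark0 hU; have R0 := ralt_of_right_alternative chark0 hU.
have S0 := ralt_of_similar F.
split=> // F1 hU1 hR1 hS1; apply: (right_alternative_similar_eq chark0 hU1 hR1 U0 R0) => s y.
by rewrite hS1 S0.
Qed.
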